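(* In any unit-weight graph with $\mathsf{OPT}<\mathsf{OPT}^{\mathsf{stable}}$, there exists a binary signaling scheme that is persuasive and has cost strictly lower than $\mathsf{OPT}^{\mathsf{stable}}$.
   Context: Setting. $V$ is a finite set of $n$ task types and $W=(W_{u,v})_{u,v\in V}$ is a symmetric matrix with entries in $\{0,1\}$ and $W_{v,v}=1$ for all $v$ (a unit-weight graph $G=(V,E)$ with $E=\{\{u,v\}:u\ne v,W_{u,v}=1\}$). A vector $\theta\in\mathbb{R}_{\ge0}^V$ is feasible if $W\theta\ge\mathbf 1$ coordinatewise, and stable if it is feasible and for every $v$, $\theta_v=\min\{x\ge0: x+\sum_{v'\neq v}W_{v,v'}\theta_{v'}\ge1\}$. $\mathsf{OPT}=\min\{\|\theta\|_1:\theta\ge0\text{ feasible}\}$ and $\mathsf{OPT}^{\mathsf{stable}}=\min\{\|\theta\|_1:\theta\text{ stable}\}$. Signaling. There are $n$ agents; the type profile $t=(t_1,\dots,t_n)$ is a uniformly random bijection $[n]\to V$. A signaling scheme with finite signal space $\Sigma\subset[0,1]$ is a map $\varphi$ assigning to each bijection $t$ a distribution $\varphi(t)$ on $\Sigma^V$; given $t$, $s\sim\varphi(t)$ is drawn and agent $i$ privately receives $s_{t_i}$. For agent $i$, a signal $\theta\in\Sigma$ with $\Pr[s_{t_i}=\theta]>0$ and $x\ge0$, let $Q_i(x\mid\theta)=\mathbb{E}\big[x+\sum_{v'\neq t_i}W_{t_i,v'}s_{v'}\,\big|\,s_{t_i}=\theta\big]$. The scheme is persuasive if for every agent $i$ and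 every such $\theta$: $Q_i(\theta\mid\theta)\ge1$ and $\theta=\min\{x\ge0:Q_i(x\mid\theta)\ge1\}$. Its cost is $\mathbb{E}[\|s\|_1]$. Binary means $|\Sigma|=2$. *)

From HB Require Import structures.
From mathcomp Require Import all_boot all_order all_algebra.
From mathcomp Require Import boolp classical_sets reals.
Set Implicit Arguments. Unset Strict Implicit. Unset Printing Implicit Defensive.
Import Order.TTheory GRing.Theory Num.Theory.
Local Open Scope ring_scope.
Local Open Scope classical_set_scope.

Section Defs.
Variables (R : realType) (V : finType).

Definition is_minimum (S : R -> Prop) (m : R) : Prop :=
  S m /\ (forall x, S x -> m <= x).

Definition unit_weight (W : V -> V -> R) : Prop :=
  [/\ forall u v, W u v = 0 \/ W u v = 1,
      forall u v, W u v = W v u &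
      forall v, W v v = 1].

Definition feasible (W : V -> V -> R) (theta : V -> R) : Prop :=
  (forall v, 0 <= theta v) /\ (forall u, 1 <= \sum_(v : V) W u v * theta v).

Definition stable (W : V -> V -> R) (theta : V -> R) : Prop :=
  feasible W theta /\
  forall v, is_minimum
    (fun x => 0 <= x /\ 1 <= x + \sum_(v' : V | v' != v) W v v' * theta v')
    (theta v).

Definition OPT (W : V -> V -> R) : R :=
  inf [set y | exists theta, feasible W theta /\ y = \sum_(v : V) theta v].

Definition OPT_stable (W : V -> V -> R) : R :=
  inf [set y | exists theta, stable W theta /\ y = \sum_(v : V) theta v].

(* Agents are 'I_#|V|; a type profile is a bijection
   t : 'I_#|V| -> V (an injective finfun), drawn uniformly.
   The signal space Sigma has k elements, given by an injective map
   sig : 'I_k -> R; a signal vector in Sigma^V is s : {ffun V -> 'I_k}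
   (the actual value of coordinate v is sig (s v)).
   A scheme phi gives, for each profile t, the probability phi t s of
   drawing signal vector s. *)
Notation profile := {ffun 'I_#|V| -> V}.

Definition is_bij (t : profile) : bool := injectiveb t.

Definition nbij : R := #|[set t : profile | is_bij t]|%:R.

Variables (k : nat) (sig : 'I_k -> R).

Definition signal_space_ok : Prop :=
  injective sig /\ (forall j, 0 <= sig j <= 1).

Definition scheme_ok (phi : profile -> {ffun V -> 'I_k} -> R) : Prop :=
  (forall t s, 0 <= phi t s) /\
  (forall t, is_bij t -> \sum_(s : {ffun V -> 'I_k}) phi t s = 1).

Variable phi : profile -> {ffun V -> 'I_k} -> R.

Definition pj (t : profile) (s : {ffun V -> 'I_k}) : R :=
  (is_bij t)%:R / nbij * phi t s.

Definition PrSig (i : 'I_#|V|) (j : 'I_k) : R :=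
  \sum_(t : profile) \sum_(s : {ffun V -> 'I_k})
     pj t s * (s (t i) == j)%:R.

(* Q_i(x | sig j) = E[ x + sum_{v' <> t_i} W_{t_i,v'} s_{v'} | s_{t_i} = sig j ] *)
Definition Q (W : V -> V -> R) (i : 'I_#|V|) (x : R) (j : 'I_k) : R :=
  (\sum_(t : profile) \sum_(s : {ffun V -> 'I_k})
     pj t s * (s (t i) == j)%:R *
       (x + \sum_(v' : V | v' != t i) W (t i) v' * sig (s v')))
  / PrSig i j.

Definition persuasive (W : V -> V -> R) : Prop :=
  forall (i : 'I_#|V|) (j : 'I_k), 0 < PrSig i j ->
    1 <= Q W i (sig j) j /\
    is_minimum (fun x => 0 <= x /\ 1 <= Q W i x j) (sig j).

Definition cost : R :=
  \sum_(t : profile) \sum_(s : {ffun V -> 'I_k})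
     pj t s * \sum_(v : V) `|sig (s v)|.

End Defs.

From HB Require Import structures.
From mathcomp Require Import all_boot all_order all_algebra perm.
From mathcomp Require Import boolp classical_sets reals.
From mathcomp Require Import ring lra.
Set Implicit Arguments. Unset Strict Implicit. Unset Printing Implicit Defensive.
Import Order.TTheory GRing.Theory Num.Theory.
Local Open Scope ring_scope.

(* Take a feasible θ' <= 1 of cost c < OPT_stable and a stable θ whose cost T is close to
   OPT_stable. Stability forces (Wθ)_v = 1 wherever θ_v > 0, so pushing the mass of θ onto a
   greedy independent set D (each vertex to an adjacent vertex of D of larger degree) yields
   p <= 1 supported on D with Σ p = T, and comparing with θ' gives Σ_v p_v deg v >= n + T - c
   (n = |V|).
   Rescale p to q with Σ_v q_v deg v = n and let every s_v be an independent Bernoulli(q_v)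
   signal, ignoring the types. An agent told 1 knows that its neighbours are told 0, so it must
   cover itself; an agent told 0 expects a neighbour load Σ_v Σ_(v'~v) q_v' / Σ_v (1 - q_v),
   which is >= 1 exactly by the normalisation of q. The cost is Σ q <= n T / (n + T - c), which
   is below OPT_stable for T close enough to it since c < OPT_stable. *)

Lemma big_ord2 (M : nmodType) (F : 'I_2 -> M) : \sum_(j < 2) F j = F ord0 + F ord_max.
Proof. by rewrite !big_ord_recr big_ord0 /= add0r; congr (F _ + F _); exact/val_inj. Qed.

Section BernoulliProduct.
Variables (R : realType) (V : finType) (q : V -> R).

Definition bit (j : 'I_2) : R := (j : nat)%:R.

Definition bern (p : R) (j : 'I_2) : R := bit j * p + (1 - bit j) * (1 - p).

Definition bern_prod (s : {ffun V -> 'I_2}) : R := \prod_v bern (q v) (s v).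

Lemma ord2P (j : 'I_2) : j = ord0 \/ j = ord_max.
Proof. case: j => [[|[|?]] ?] //; [left | right]; exact: val_inj. Qed.

Lemma bit01 j : bit j = 0 \/ bit j = 1.
Proof. by case: (ord2P j) => ->; [left | right]. Qed.

Lemma bit_ord0 : bit ord0 = 0. Proof. by []. Qed.

Lemma bit_ord_max : bit ord_max = 1. Proof. by []. Qed.

Lemma bit_inj : injective bit.
Proof. by move=> a b /eqP; rewrite eqr_nat => /eqP; exact: val_inj. Qed.

Lemma eq_ord0_bit (a : 'I_2) : (a == ord0)%:R = 1 - bit a.
Proof. by case: (ord2P a) => ->; rewrite /bit /= ?subr0 ?subrr. Qed.

Lemma eq_ord_max_bit (a : 'I_2) : (a == ord_max)%:R = bit a.
Proof. by case: (ord2P a) => ->. Qed.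

Lemma sum_bern p : \sum_j bern p j = 1.
Proof. by rewrite big_ord2 /bern /bit /= mulr0n mulr1n; ring. Qed.

Lemma sum_bern_bit p : \sum_j bern p j * bit j = p.
Proof. by rewrite big_ord2 /bern /bit /= mulr0n mulr1n; ring. Qed.

Lemma bern_prod_ge0 : (forall v, 0 <= q v <= 1) -> forall s, 0 <= bern_prod s.
Proof.
move=> q01 s; apply: prodr_ge0 => v _; have /andP[? ?] := q01 v.
by rewrite /bern; case: (bit01 (s v)) => ->; lra.
Qed.

Lemma bern_prod_moment (A : {set V}) :
  \sum_s bern_prod s * \prod_(v in A) bit (s v) = \prod_(v in A) q v.
Proof.
transitivity (\sum_(s : {ffun V -> 'I_2})
    \prod_v (bern (q v) (s v) * (if v \in A then bit (s v) else 1))).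
  by apply: eq_bigr => s _; rewrite big_split /= -big_mkcond.
rewrite -(@bigA_distr_bigA _ _ _ _ _ _ _
  (fun v j => bern (q v) j * (if v \in A then bit j else 1))).
rewrite [RHS]big_mkcond; apply: eq_bigr => v _; case: (v \in A).
  exact: sum_bern_bit.
by under eq_bigr do rewrite mulr1; rewrite sum_bern.
Qed.

Lemma sum_bern_prod : \sum_s bern_prod s = 1.
Proof.
transitivity (\sum_s bern_prod s * \prod_(v in finset.set0) bit (s v)).
  by apply: eq_bigr => s _; rewrite big_set0 mulr1.
by rewrite bern_prod_moment big_set0.
Qed.

Lemma bern_prod_bit v : \sum_s bern_prod s * bit (s v) = q v.
Proof.
transitivity (\sum_s bern_prod s * \prod_(u in [set v]) bit (s u)).
  by apply: eq_bigr => s _; rewrite big_set1.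
by rewrite bern_prod_moment big_set1.
Qed.

Lemma bern_prod_compl v : \sum_s bern_prod s * (1 - bit (s v)) = 1 - q v.
Proof.
under eq_bigr do rewrite mulrBr mulr1.
by rewrite sumrB sum_bern_prod bern_prod_bit.
Qed.

Lemma bern_prod_bit2 v v' : v != v' ->
  \sum_s bern_prod s * (bit (s v) * bit (s v')) = q v * q v'.
Proof.
move=> vv'; have vNv' : v \notin [set v'] by rewrite inE.
transitivity (\sum_s bern_prod s * \prod_(u in [set v; v']) bit (s u)).
  by apply: eq_bigr => s _; rewrite big_setU1 //= big_set1.
by rewrite bern_prod_moment big_setU1 //= big_set1.
Qed.

End BernoulliProduct.

Section UniformProfile.
Variables (R : realType) (V : finType).
Notation profile := {ffun 'I_#|V| -> V}.

Lemma is_bij_perm (p : {perm V}) (t : profile) : is_bij [ffun i => p (t i)] = is_bij t.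
Proof.
apply/injectiveP/injectiveP => t_inj i j eq_tij; apply: t_inj; rewrite !ffunE in eq_tij *.
  by rewrite eq_tij.
exact: perm_inj eq_tij.
Qed.

Definition nbij_at (i : 'I_#|V|) (v : V) : R := \sum_(t : profile) (is_bij t && (t i == v))%:R.

Lemma nbij_at_const i a b : nbij_at i a = nbij_at i b.
Proof.
pose swap (t : profile) : profile := [ffun k => tperm a b (t k)].
have swapK : involutive swap by move=> t; apply/ffunP => k; rewrite !ffunE tpermK.
rewrite /nbij_at (reindex_inj (can_inj swapK)); apply: eq_bigr => t _.
by rewrite is_bij_perm ffunE -[X in _ == X](tpermR a b) (inj_eq perm_inj).
Qed.

Lemma sum_bij_at i v0 (K : V -> R) :
  \sum_(t : profile) (is_bij t)%:R * K (t i) = nbij_at i v0 * \sum_v K v.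
Proof.
transitivity (\sum_(t : profile) \sum_v (is_bij t && (t i == v))%:R * K v).
  apply: eq_bigr => t _; rewrite (bigD1 (t i)) //= eqxx andbT big1 ?addr0 // => v.
  by rewrite eq_sym => /negbTE ->; rewrite andbF mul0r.
rewrite exchange_big mulr_sumr; apply: eq_bigr => v _.
by rewrite -mulr_suml -/(nbij_at i v) (nbij_at_const i v v0) mulrC.
Qed.

Lemma nbij_gt0 : 0 < nbij R V.
Proof.
rewrite ltr0n; apply/card_gt0P; exists [ffun k => enum_val k].
by rewrite inE; apply/injectiveP => x y; rewrite !ffunE => /enum_val_inj.
Qed.

Lemma nbij_sum : nbij R V = \sum_(t : profile) (is_bij t)%:R.
Proof.
rewrite /nbij (eq_card (B := [pred t : profile | is_bij t])) => [|t]; last exact: asboolb.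
rewrite -sum1_card natr_sum big_mkcond /=; apply: eq_bigr => t _.
by rewrite inE; case: (is_bij t).
Qed.

Lemma sum_bij_div : \sum_(t : profile) (is_bij t)%:R / nbij R V = 1.
Proof. by rewrite -mulr_suml -nbij_sum mulfV // lt0r_neq0 // nbij_gt0. Qed.

Lemma nbijE i v0 : nbij R V = #|V|%:R * nbij_at i v0.
Proof.
rewrite nbij_sum (eq_bigr (fun t => (is_bij t)%:R * 1)) => [|t _]; last by rewrite mulr1.
by rewrite (sum_bij_at i v0 (fun=> 1)) sumr_const mulrC.
Qed.

Lemma avg_bij_at i (K : V -> R) :
  \sum_(t : profile) (is_bij t)%:R / nbij R V * K (t i) = #|V|%:R^-1 * \sum_v K v.
Proof.
pose v0 : V := enum_val i.
have nbij_at_neq0 : nbij_at i v0 != 0.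
  by apply/eqP => nbij_at0; have := nbij_gt0; rewrite (nbijE i v0) nbij_at0 mulr0 ltxx.
under eq_bigr do rewrite mulrAC.
by rewrite -mulr_suml (sum_bij_at i v0) (nbijE i v0) invfM mulrC mulrA divfK.
Qed.

End UniformProfile.

Definition deg (R : nmodType) (V : finType) (W : V -> V -> R) (v : V) : R := \sum_u W v u.

Section BernoulliScheme.
Variables (R : realType) (V : finType) (W : V -> V -> R) (q : V -> R).
Hypothesis W01 : forall u v, W u v = 0 \/ W u v = 1.
Hypothesis Wsym : forall u v, W u v = W v u.
Hypothesis Wdiag : forall v, W v v = 1.
Hypothesis q_indep : forall v v', v != v' -> W v v' = 1 -> q v * q v' = 0.
Hypothesis q_cover : #|V|%:R <= \sum_v q v * deg W v.

Notation profile := {ffun 'I_#|V| -> V}.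
Notation signals := {ffun V -> 'I_2}.

Definition bern_scheme (t : profile) (s : signals) : R := bern_prod q s.

Definition nbr_signal (v : V) (s : signals) : R := \sum_(v' | v' != v) W v v' * bit R (s v').

Lemma sum_pj_bern i (H : V -> signals -> R) :
  \sum_(t : profile) \sum_s pj bern_scheme t s * H (t i) s =
  #|V|%:R^-1 * \sum_v \sum_s bern_prod q s * H v s.
Proof.
rewrite -(avg_bij_at i); apply: eq_bigr => t _.
by rewrite mulr_sumr; apply: eq_bigr => s _; rewrite /pj /bern_scheme mulrA.
Qed.

Lemma bern_nbr_signal v :
  \sum_s bern_prod q s * nbr_signal v s = \sum_(v' | v' != v) W v v' * q v'.
Proof.
under eq_bigr do rewrite mulr_sumr.
rewrite exchange_big; apply: eq_bigr => v' _.
by rewrite -(bern_prod_bit q v') mulr_sumr; apply: eq_bigr => s _; rewrite mulrCA.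
Qed.

Lemma bern_bit_nbr_signal v : \sum_s bern_prod q s * (bit R (s v) * nbr_signal v s) = 0.
Proof.
under eq_bigr do rewrite !mulr_sumr.
rewrite exchange_big big1 // => v' v'v.
transitivity (W v v' * \sum_s bern_prod q s * (bit R (s v) * bit R (s v'))).
  by rewrite mulr_sumr; apply: eq_bigr => s _; ring.
rewrite bern_prod_bit2; last by rewrite eq_sym.
case: (W01 v v') => Wvv'; first by rewrite Wvv' mul0r.
by rewrite q_indep ?mulr0 // eq_sym.
Qed.

Lemma bern_bit_cond v x :
  \sum_s bern_prod q s * (bit R (s v) * (x + nbr_signal v s)) = x * q v.
Proof.
rewrite (eq_bigr (fun s => x * (bern_prod q s * bit R (s v)) +
                          bern_prod q s * (bit R (s v) * nbr_signal v s))) => [|s _]; last by ring.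
by rewrite big_split /= -mulr_sumr bern_prod_bit bern_bit_nbr_signal addr0.
Qed.

(* The [0 +] is the signal value [bit R ord0] as it appears in [Q]. *)
Lemma bern_compl_cond v :
  \sum_s bern_prod q s * ((1 - bit R (s v)) * (0 + nbr_signal v s)) =
  \sum_(v' | v' != v) W v v' * q v'.
Proof.
rewrite (eq_bigr (fun s => bern_prod q s * nbr_signal v s -
                          bern_prod q s * (bit R (s v) * nbr_signal v s))) => [|s _]; last by ring.
by rewrite sumrB bern_nbr_signal bern_bit_nbr_signal subr0.
Qed.

Lemma sum_compl_le_nbr : \sum_v (1 - q v) <= \sum_v \sum_(v' | v' != v) W v v' * q v'.
Proof.
have nbrE v : \sum_(v' | v' != v) W v v' * q v' = \sum_v' W v v' * q v' - q v.
  by rewrite [X in _ = X - _](bigD1 v) //= Wdiag mul1r addrC addrK.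
have degE : \sum_v q v * deg W v = \sum_v \sum_v' W v v' * q v'.
  rewrite exchange_big; apply: eq_bigr => v _; rewrite /deg mulr_sumr.
  by apply: eq_bigr => u _; rewrite Wsym mulrC.
under [X in _ <= X]eq_bigr do rewrite nbrE.
by rewrite !sumrB lerD2r sumr_const -degE.
Qed.

Lemma PrSig_bern i j :
  PrSig bern_scheme i j = #|V|%:R^-1 * \sum_v \sum_s bern_prod q s * (s v == j)%:R.
Proof. exact: sum_pj_bern. Qed.

Lemma Q_bern i x j : Q (bit R) bern_scheme W i x j =
  (\sum_v \sum_s bern_prod q s * ((s v == j)%:R * (x + nbr_signal v s))) /
  (\sum_v \sum_s bern_prod q s * (s v == j)%:R).
Proof.
have n_neq0 : #|V|%:R^-1 != 0 :> R.
  by rewrite invr_eq0 pnatr_eq0 -lt0n (leq_ltn_trans _ (ltn_ord i)).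
rewrite /Q PrSig_bern (_ : \sum_t \sum_s _ = #|V|%:R^-1 *
    \sum_v \sum_s bern_prod q s * ((s v == j)%:R * (x + nbr_signal v s))).
  by rewrite invfM mulrACA mulfV // mul1r.
rewrite -(sum_pj_bern i); apply: eq_bigr => t _; apply: eq_bigr => s _; by rewrite mulrA.
Qed.

Lemma PrSig_bern_ord0 i : PrSig bern_scheme i ord0 = #|V|%:R^-1 * \sum_v (1 - q v).
Proof.
rewrite PrSig_bern; under eq_bigr do under eq_bigr do rewrite eq_ord0_bit.
by under eq_bigr do rewrite bern_prod_compl.
Qed.

Lemma PrSig_bern_ord_max i : PrSig bern_scheme i ord_max = #|V|%:R^-1 * \sum_v q v.
Proof.
rewrite PrSig_bern; under eq_bigr do under eq_bigr do rewrite eq_ord_max_bit.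
by under eq_bigr do rewrite bern_prod_bit.
Qed.

Lemma Q_bern_ord0 i : Q (bit R) bern_scheme W i 0 ord0 =
  (\sum_v \sum_(v' | v' != v) W v v' * q v') / \sum_v (1 - q v).
Proof.
rewrite Q_bern; under eq_bigr do under eq_bigr do rewrite eq_ord0_bit.
under eq_bigr do rewrite bern_compl_cond.
under [X in _ / X]eq_bigr do under eq_bigr do rewrite eq_ord0_bit.
by under [X in _ / X]eq_bigr do rewrite bern_prod_compl.
Qed.

Lemma Q_bern_ord_max i x : 0 < \sum_v q v -> Q (bit R) bern_scheme W i x ord_max = x.
Proof.
move=> sum_q_gt0; rewrite Q_bern.
under eq_bigr do under eq_bigr do rewrite eq_ord_max_bit.
under eq_bigr do rewrite bern_bit_cond.
under [X in _ / X]eq_bigr do under eq_bigr do rewrite eq_ord_max_bit.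
under [X in _ / X]eq_bigr do rewrite bern_prod_bit.
by rewrite -mulr_sumr mulfK // lt0r_neq0.
Qed.

Lemma persuasive_bern : persuasive (bit R) bern_scheme W.
Proof.
move=> i j; have n_gt0 : 0 < #|V|%:R^-1 :> R.
  by rewrite invr_gt0 ltr0n (leq_ltn_trans _ (ltn_ord i)).
rewrite /is_minimum; case: (ord2P j) => ->.
- rewrite PrSig_bern_ord0 pmulr_rgt0 // bit_ord0 Q_bern_ord0 => compl_gt0.
  have Q0_ge1 : 1 <= (\sum_v \sum_(v' | v' != v) W v v' * q v') / \sum_v (1 - q v).
    by rewrite ler_pdivlMr // mul1r sum_compl_le_nbr.
  by split=> //; split=> [|x []].
- rewrite PrSig_bern_ord_max pmulr_rgt0 // bit_ord_max => sum_q_gt0.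
  by rewrite !Q_bern_ord_max //; split=> //; split=> // x [_]; rewrite Q_bern_ord_max.
Qed.

Lemma cost_bern : cost (bit R) bern_scheme = \sum_v q v.
Proof.
rewrite /cost (eq_bigr (fun t => (is_bij t)%:R / nbij R V *
    \sum_s bern_prod q s * \sum_v `|bit R (s v)|)) => [|t _]; last first.
  by rewrite mulr_sumr; apply: eq_bigr => s _; rewrite /pj /bern_scheme mulrA.
rewrite -mulr_suml sum_bij_div mul1r.
under eq_bigr do rewrite mulr_sumr.
rewrite exchange_big; apply: eq_bigr => v _; rewrite -bern_prod_bit.
by apply: eq_bigr => s _; rewrite ger0_norm //; case: (bit01 R (s v)) => ->.
Qed.

End BernoulliScheme.

Section Graph.
Variables (R : realType) (V : finType) (W : V -> V -> R).
Hypothesis W01 : forall u v, W u v = 0 \/ W u v = 1.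
Hypothesis Wsym : forall u v, W u v = W v u.
Hypothesis Wdiag : forall v, W v v = 1.

Lemma W_ge0 u v : 0 <= W u v.
Proof. by case: (W01 u v) => ->. Qed.

Lemma greedy_independent_cover (w : V -> R) (S : {set V}) :
  exists (D : {set V}) (f : V -> V),
  [/\ D \subset S, {in D &, forall d d', d != d' -> W d d' = 0} &
      {in S, forall u, [/\ f u \in D, W u (f u) = 1 & w u <= w (f u)]}].
Proof.
have [m] := ubnP #|S|; elim: m S => // m IH S; rewrite ltnS => S_le.
have [-> | [x xS]] := set_0Vmem S.
  by exists finset.set0, id; split=> [|d|u]; rewrite ?finset.sub0set ?inE.
have [d dS d_max] := @arg_maxP _ _ _ x (mem S) w xS.
set S' := S :\: [set u | W d u == 1].
have dNS' : d \notin S' by rewrite !inE Wdiag eqxx.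
have [|D [f [D_S' D_indep f_cover]]] := IH S'.
  apply: leq_trans S_le; apply: proper_card.
  by apply/properP; split; [exact: subsetDl | exists d].
have W_dD y : y \in D -> W d y = 0.
  move=> /(fintype.subsetP D_S'); rewrite !inE => /andP[Wdy _].
  by case: (W01 d y) => // Wdy1; rewrite Wdy1 eqxx in Wdy.
exists (d |: D), (fun u => if u \in S' then f u else d); split.
- apply/fintype.subsetP => y; rewrite !inE => /predU1P[-> // | /(fintype.subsetP D_S')].
  by rewrite !inE => /andP[].
- move=> a b; rewrite !inE => /predU1P[-> | aD] /predU1P[-> | bD]; rewrite ?eqxx //.
  + by move=> _; exact: W_dD.
  + by move=> _; rewrite Wsym; exact: W_dD.
  + exact: D_indep.
- move=> u uS; case: ifP => uS'.
    by have [fuD ? ?] := f_cover u uS'; rewrite inE fuD orbT.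
  split; [by rewrite !inE eqxx | | exact: d_max].
  by move: uS'; rewrite !inE uS andbT => /negbFE /eqP; rewrite Wsym.
Qed.

Lemma stable_tight (th : V -> R) v : stable W th -> 0 < th v -> \sum_u W v u * th u = 1.
Proof.
move=> [_ th_min] th_gt0; have [[_ th_feas] th_le] := th_min v.
rewrite (bigD1 v) //= Wdiag mul1r.
set N := \sum_(u | u != v) W v u * th u in th_feas th_le *.
have [N_ge1 | N_lt1] := lerP 1 N.
  by have := th_le 0; rewrite add0r lexx => /(_ (conj isT N_ge1)); lra.
have := th_le (1 - N); rewrite subrK lexx subr_ge0 ltW // => /(_ (conj isT isT)); lra.
Qed.

Lemma feasible_deg_excess (th th' : V -> R) :
  feasible W th -> feasible W th' -> (forall v, th' v <= 1) ->
  #|V|%:R + \sum_v th v - \sum_v th' v <= \sum_u th u * deg W u.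
Proof.
move=> [th_ge0 th_feas] [th'_ge0 th'_feas] th'_le1.
(* [A] is squeezed: [W θ' >= 1] bounds it below, [(1 - θ'_v) ((W θ)_v - 1) >= 0] above. *)
pose A := \sum_v th' v * \sum_u W v u * th u.
have th_le_A : \sum_u th u <= A.
  rewrite /A [X in _ <= X](eq_bigr (fun v => \sum_u th u * (W u v * th' v))) => [|v _]; last first.
    by rewrite mulr_sumr; apply: eq_bigr => u _; rewrite Wsym; ring.
  rewrite exchange_big /=; apply: ler_sum => u _; rewrite -mulr_sumr.
  by have := th'_feas u; have := th_ge0 u; nra.
have A_le : A <= \sum_v (th' v + (\sum_u W v u * th u - 1)).
  apply: ler_sum => v _.
  by have := th'_feas v; have := th'_ge0 v; have := th'_le1 v; have := th_feas v; nra.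
have degE : \sum_u th u * deg W u = \sum_v \sum_u W v u * th u.
  rewrite exchange_big; apply: eq_bigr => u _; rewrite /deg mulr_sumr.
  by apply: eq_bigr => v _; rewrite Wsym mulrC.
move: A_le; rewrite big_split sumrB sumr_const /= degE; lra.
Qed.

Lemma stable_independent_push (th : V -> R) : stable W th ->
  exists p : V -> R, [/\ forall v, 0 <= p v <= 1,
    forall v v', v != v' -> W v v' = 1 -> p v * p v' = 0,
    \sum_v p v = \sum_v th v &
    \sum_u th u * deg W u <= \sum_v p v * deg W v].
Proof.
move=> th_st; have [[th_ge0 _] _] := th_st.
pose S := [set u | 0 < th u].
have th0 u : u \notin S -> th u = 0.
  by rewrite inE -leNgt => th_le0; apply/le_anti; rewrite th_le0 th_ge0.
have [D [f [D_S D_indep f_cover]]] := greedy_independent_cover (deg W) S.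
pose p v := \sum_(u | f u == v) th u.
have p_ge0 v : 0 <= p v by apply: sumr_ge0.
have p0 v : v \notin D -> p v = 0.
  move=> vND; apply: big1 => u /eqP fu.
  case: (boolP (u \in S)) => [uS | /th0 //].
  by have [fuD _ _] := f_cover u uS; rewrite fu (negbTE vND) in fuD.
have p_le1 v : p v <= 1.
  case: (boolP (v \in D)) => [vD | /p0 ->]; last exact: ler01.
  have vS : 0 < th v by have := fintype.subsetP D_S v vD; rewrite inE.
  rewrite -(stable_tight th_st vS) [X in _ <= X](bigID (fun u => f u == v)) /= ler_wpDr //.
    by apply: sumr_ge0 => u _; rewrite mulr_ge0 ?W_ge0.
  apply: ler_sum => u /eqP fu; case: (boolP (u \in S)) => [uS | /th0 ->]; last by rewrite mulr0.
  by have [_ Wufu _] := f_cover u uS; rewrite -fu Wsym Wufu mul1r.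
exists p; split.
- by move=> v; rewrite p_ge0 p_le1.
- move=> v v' vv' Wvv'.
  case: (boolP (v \in D)) => [vD | /p0 ->]; last by rewrite mul0r.
  case: (boolP (v' \in D)) => [v'D | /p0 ->]; last by rewrite mulr0.
  by move: (D_indep v v' vD v'D vv'); rewrite Wvv' => /eqP; rewrite oner_eq0.
- by rewrite [RHS](partition_big f predT).
- have -> : \sum_v p v * deg W v = \sum_u th u * deg W (f u).
    rewrite [RHS](partition_big f predT) //=; apply: eq_bigr => v _.
    by rewrite mulr_suml; apply: eq_bigr => u /eqP ->.
  apply: ler_sum => u _; case: (boolP (u \in S)) => [uS | /th0 ->]; last by rewrite !mul0r.
  by have [_ _ deg_le] := f_cover u uS; rewrite ler_wpM2l ?th_ge0.
Qed.

Lemma exists_cover_marginals (th th' : V -> R) :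
  stable W th -> feasible W th' -> (forall v, th' v <= 1) -> \sum_v th' v < \sum_v th v ->
  exists q : V -> R, [/\ forall v, 0 <= q v <= 1,
    forall v v', v != v' -> W v v' = 1 -> q v * q v' = 0,
    #|V|%:R <= \sum_v q v * deg W v &
    (\sum_v q v) * (#|V|%:R + \sum_v th v - \sum_v th' v) <= #|V|%:R * \sum_v th v].
Proof.
move=> th_st th'_feas th'_le1 th'_lt.
have excess := feasible_deg_excess (proj1 th_st) th'_feas th'_le1.
have [p [p01 p_indep p_sum p_deg]] := stable_independent_push th_st.
set n : R := #|V|%:R in excess *; set T := \sum_v th v in th'_lt excess p_sum *.
set c := \sum_v th' v in th'_lt excess *; set P := \sum_v p v * deg W v in p_deg.
have n_ge0 : 0 <= n by rewrite ler0n.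
have T_ge0 : 0 <= T by apply: sumr_ge0 => v _; exact: (proj1 (proj1 th_st)).
have P_ge : n + T - c <= P by apply: le_trans p_deg.
have P_gt0 : 0 < P by lra.
have k01 : 0 <= n / P <= 1.
  by rewrite divr_ge0 ?(ltW P_gt0) //= ler_pdivrMr // mul1r; lra.
exists (fun v => n / P * p v); split.
- move=> v; have := p01 v; move: k01 => /andP[? ?] /andP[? ?].
  by rewrite mulr_ge0 //=; nra.
- by move=> v v' vv' Wvv'; rewrite mulrACA p_indep // mulr0.
- rewrite (eq_bigr (fun v => n / P * (p v * deg W v))) => [|v _]; last by rewrite mulrA.
  by rewrite -mulr_sumr -/P mulfVK ?lt0r_neq0.
- rewrite -mulr_sumr p_sum (_ : _ * _ = n * T * ((n + T - c) / P)); last by ring.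
  by rewrite ler_piMr ?mulr_ge0 // ler_pdivrMr // mul1r.
Qed.

End Graph.

Section Optima.
Variables (R : realType) (V : finType) (W : V -> V -> R).
Hypothesis W01 : forall u v, W u v = 0 \/ W u v = 1.
Hypothesis Wdiag : forall v, W v v = 1.

Lemma feasible1 : feasible W (fun=> 1).
Proof.
split=> // u; rewrite (bigD1 u) //= Wdiag mulr1 lerDl.
by apply: sumr_ge0 => v _; rewrite mulr1 W_ge0.
Qed.

Lemma feasible_min1 (th : V -> R) : feasible W th -> feasible W (fun v => Num.min (th v) 1).
Proof.
move=> [th_ge0 th_feas]; split=> [v | u]; first by rewrite le_min th_ge0 ler01.
have [[v [Wuv th_ge1]] | th_lt1] := pselect (exists v, W u v = 1 /\ 1 <= th v).
  rewrite (bigD1 v) //= Wuv mul1r (min_r th_ge1) lerDl.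
  by apply: sumr_ge0 => x _; rewrite mulr_ge0 ?W_ge0 // le_min th_ge0 ler01.
apply: (le_trans (th_feas u)); apply: ler_sum => v _.
case: (W01 u v) => Wuv; rewrite Wuv ?mul0r // !mul1r le_min lexx ltW //.
by rewrite ltNge; apply/negP => th_ge1; apply: th_lt1; exists v.
Qed.

Lemma feasible_costs_neq0 :
  ([set y | exists th, feasible W th /\ y = \sum_v th v] !=set0)%classic.
Proof. by exists (\sum_(v : V) 1), (fun=> 1); split=> //; exact: feasible1. Qed.

Lemma OPT_ge0 : 0 <= OPT W.
Proof.
apply: lb_le_inf; first exact: feasible_costs_neq0.
by move=> _ [th [[th_ge0 _] ->]]; apply: sumr_ge0.
Qed.

Lemma feasible_le1_lt (r : R) : OPT W < r ->
  exists th, [/\ feasible W th, forall v, th v <= 1 & \sum_v th v < r].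
Proof.
move=> OPT_lt.
have [_ [th [th_feas ->]] th_lt] := inf_lt feasible_costs_neq0 OPT_lt.
exists (fun v => Num.min (th v) 1); split; first exact: feasible_min1.
  by move=> v; rewrite ge_min lexx orbT.
by apply: le_lt_trans th_lt; apply: ler_sum => v _; rewrite ge_min lexx.
Qed.

Lemma stable_near_OPT_stable (e : R) : OPT W < OPT_stable W -> 0 < e ->
  exists th, [/\ stable W th, OPT_stable W <= \sum_v th v & \sum_v th v < OPT_stable W + e].
Proof.
move=> gap e_gt0.
set SS := [set y | exists th, stable W th /\ y = \sum_v th v]%classic.
have SS_ne : (SS !=set0)%classic.
  apply: contrapT => SS0; move: gap; rewrite /OPT_stable -/SS.
  have -> : SS = set0 by apply/seteqP; split => [y SSy | //]; apply: SS0; exists y.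
  by rewrite inf0 ltNge OPT_ge0.
have lt_e : OPT_stable W < OPT_stable W + e by rewrite ltrDl.
have [_ [th [th_st ->]] th_lt] := inf_lt SS_ne lt_e.
exists th; split=> //; apply: ge_inf; last by exists th.
by exists 0 => _ [th0 [[[th0_ge0 _] _] ->]]; apply: sumr_ge0.
Qed.

End Optima.

Lemma lt_of_mul_le_near (R : realFieldType) (n c s T x : R) :
  0 <= n -> 0 <= c -> c < s -> s <= T -> T < s + s * (s - c) / (n + 1) ->
  x * (n + T - c) <= n * T -> x < s.
Proof.
move=> n_ge0 c_ge0 c_lt_s s_le_T T_lt x_le.
(* [s (n + T - c) - n T = n (s - T) + s (T - c) >= s (s - c) / (n + 1) > 0]. *)
have n1_gt0 : 0 < n + 1 by lra.
set d := s * (s - c) / (n + 1) in T_lt.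
have d_n1 : d * (n + 1) = s * (s - c) by rewrite mulfVK // lt0r_neq0.
have D_gt0 : 0 < n + T - c by lra.
rewrite -(ltr_pM2r D_gt0); apply: le_lt_trans x_le _.
nra.
Qed.

Theorem theorem1p3 (R : realType) (V : finType) (W : V -> V -> R) :
  unit_weight W ->
  OPT W < OPT_stable W ->
  exists (sig : 'I_2 -> R) (phi : {ffun 'I_#|V| -> V} -> {ffun V -> 'I_2} -> R),
    [/\ signal_space_ok sig, scheme_ok phi,
        persuasive sig phi W & cost sig phi < OPT_stable W].
Proof.
move=> [W01 Wsym Wdiag] gap.
have [th' [th'_feas th'_le1 th'_lt]] := feasible_le1_lt W01 Wdiag gap.
set s := OPT_stable W in gap th'_lt *; set c := \sum_v th' v in th'_lt.
have c_ge0 : 0 <= c by apply: sumr_ge0 => v _; exact: (proj1 th'_feas).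
have e_gt0 : 0 < s * (s - c) / (#|V|%:R + 1).
  by rewrite divr_gt0 ?mulr_gt0 ?subr_gt0 ?ltr_wpDl ?ler0n //; lra.
have [th [th_st s_le th_lt]] := stable_near_OPT_stable W01 Wdiag gap e_gt0.
have [q [q01 q_indep q_cover q_cost]] :=
  exists_cover_marginals W01 Wsym Wdiag th_st th'_feas th'_le1 (lt_le_trans th'_lt s_le).
exists (bit R), (bern_scheme q); split.
- by split=> [|j]; [exact: bit_inj | case: (bit01 R j) => ->; rewrite ?lexx ?ler01].
- by split=> [t | t _]; [exact: bern_prod_ge0 | exact: sum_bern_prod].
- exact: persuasive_bern.
- by rewrite cost_bern; apply: (lt_of_mul_le_near _ c_ge0 th'_lt s_le th_lt q_cost); rewrite ler0n.
Qed.
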